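(* Consider the robot rendezvous system $$\dot{x}_k(t)=x_{k-1}(t)-x_k(t),\quad k\in\mathbb{Z},\ t\ge0,$$ with initial constellation $x_0=(x_k(0))_{k\in\mathbb{Z}}\in\ell^\infty(\mathbb{Z})$. Then $x_0$ is good if and only if there exists $c\in\mathbb{C}$ such that $$\sup_{k\in\mathbb{Z}}\bigg|\frac{1}{n}\sum_{j=1}^n x_{k-j}(0)-c\bigg|\to0\quad\text{as } n\to\infty.$$ Moreover, if this holds, then $\sup_{k\in\mathbb{Z}}|x_k(t)-c|\to0$ as $t\to\infty$.
   Context: $\ell^\infty(\mathbb{Z})$ is the Banach space of bounded doubly infinite complex sequences with the supremum norm. $S$ denotes the right-shift operator on $\ell^\infty(\mathbb{Z})$, $S(x_k)=(x_{k-1})$. For $x_0\in\ell^\infty(\mathbb{Z})$, the solution of the system is $x(t)=(x_k(t))_{k\in\mathbb{Z}}=\exp(t(S-I))x_0$, $t\ge0$. An initial constellation $x_0\in\ell^\infty(\mathbb{Z})$ is called good if there exist constants $c_k\in\mathbb{C}$, $k\in\mathbb{Z}$, such that the corresponding solution satisfies $\sup_{k\in\mathbb{Z}}|x_k(t)-c_k|\to0$ as $t\to\infty$. *)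

From Stdlib Require Import Reals ZArith ClassicalEpsilon.
Open Scope R_scope.

Record Cx := mkC { Re : R; Im : R }.

Definition Csub (z w : Cx) : Cx := mkC (Re z - Re w) (Im z - Im w).
Definition Cmod (z : Cx) : R := sqrt (Re z ^ 2 + Im z ^ 2).

Definition linf (x : Z -> Cx) : Prop :=
  exists M : R, forall k : Z, Cmod (x k) <= M.

(** Limit of a real sequence (chosen classically; meaningful when it converges). *)
Definition lim_seq (u : nat -> R) : R :=
  epsilon (inhabits 0) (fun l => Un_cv u l).

(** Solution x(t) = exp(t(S-I)) x0 = e^{-t} sum_{j>=0} t^j/j! S^j x0, i.e.
    x_k(t) = e^{-t} sum_{j>=0} t^j/j! x_{k-j}(0)  (S = right shift). *)
Definition sol (x0 : Z -> Cx) (t : R) (k : Z) : Cx :=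
  mkC (exp (- t) * lim_seq (fun n => sum_f_R0
          (fun j => t ^ j / INR (fact j) * Re (x0 (k - Z.of_nat j)%Z)) n))
      (exp (- t) * lim_seq (fun n => sum_f_R0
          (fun j => t ^ j / INR (fact j) * Im (x0 (k - Z.of_nat j)%Z)) n)).

Definition unif_conv_time (x : R -> Z -> Cx) (c : Z -> Cx) : Prop :=
  forall eps : R, eps > 0 -> exists T : R, forall t : R, t >= T ->
    forall k : Z, Cmod (Csub (x t k) (c k)) <= eps.

Definition good (x0 : Z -> Cx) : Prop :=
  exists c : Z -> Cx, unif_conv_time (sol x0) c.

Definition cesaro (x0 : Z -> Cx) (n : nat) (k : Z) : Cx :=
  mkC (/ INR n * sum_f_R0 (fun j => Re (x0 (k - Z.of_nat (S j))%Z)) (pred n))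
      (/ INR n * sum_f_R0 (fun j => Im (x0 (k - Z.of_nat (S j))%Z)) (pred n)).

Definition cesaro_conv (x0 : Z -> Cx) (c : Cx) : Prop :=
  forall eps : R, eps > 0 -> exists N : nat, forall n : nat, (n >= N)%nat -> (n >= 1)%nat ->
    forall k : Z, Cmod (Csub (cesaro x0 n k) c) <= eps.

(* The solution is the Poisson smoothing x_k(t) = e^{-t} sum_j t^j/j! x_{k-j}(0) of the
   initial constellation: an average of its backward shifts against the Poisson law of mean t
   and variance t.  Smoothing a sequence whose increments are
   bounded by L moves it by at most L t (the mean), and the smoothed sequence has increments at
   most |x_0|/sqrt t (the variance, via AM-GM).  Smoothing also commutes with Cesaro means.
   If the means converge uniformly to c, smoothing keeps the n-th mean near c, while replacing
   x_0 by its n-th mean changes the smoothing by at most n |x_0|/sqrt t.  Conversely, a uniform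
   limit of the smoothing has vanishing increments, so it is a constant c; at a fixed large t
   the n-th mean of x_0 is then within 2 |x_0| t/n of the n-th mean of the smoothing, which is
   near c. *)

From Stdlib Require Import Reals ZArith Lra Lia ClassicalEpsilon.
From Coquelicot Require Import Rcomplements Hierarchy Series ElemFct.
Open Scope R_scope.

(* Real instances of Coquelicot lemmas, so that equations are stated in [R] (where [field]
   applies) and limits are real expressions. *)
Lemma is_series_ext_R (a b : nat -> R) (l : R) :
  (forall n, a n = b n) -> is_series a l -> is_series b l.
Proof. apply is_series_ext. Qed.

Lemma is_series_shift_R (a : nat -> R) (l : R) :
  is_series (fun j => a (S j)) (l - a O) -> is_series a l.
Proof. apply (is_series_decr_1 (V := R_NormedModule)). Qed.

Definition poisson_weight (t : R) (j : nat) : R := t ^ j / INR (fact j).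

Lemma poisson_weight_ge0 t j : 0 <= t -> 0 <= poisson_weight t j.
Proof.
  intros Ht. apply Rmult_le_pos; [now apply pow_le |].
  apply Rlt_le, Rinv_0_lt_compat, lt_0_INR, lt_O_fact.
Qed.

Lemma poisson_weight_S t j :
  poisson_weight t (S j) = t * poisson_weight t j / INR (S j).
Proof.
  unfold poisson_weight. rewrite fact_simpl, mult_INR. simpl pow.
  assert (INR (fact j) <> 0) by apply INR_fact_neq_0.
  assert (INR (S j) <> 0) by (apply not_0_INR; lia).
  field; auto.
Qed.

Lemma is_series_poisson_weight t : is_series (poisson_weight t) (exp t).
Proof.
  apply (is_series_ext_R (fun n => scal (pow_n t n) (/ INR (fact n)))).
  - intros n. rewrite pow_n_pow. reflexivity.
  - apply is_exp_Reals.
Qed.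

Lemma is_series_poisson_mean t :
  is_series (fun j => INR j * poisson_weight t j) (t * exp t).
Proof.
  apply is_series_shift_R. change (INR 0) with 0. rewrite Rmult_0_l, Rminus_0_r.
  apply (is_series_ext_R (fun j => t * poisson_weight t j)).
  - intros j. rewrite poisson_weight_S.
    assert (INR (S j) <> 0) by (apply not_0_INR; lia). field; auto.
  - apply (is_series_scal_l (V := R_NormedModule) t), is_series_poisson_weight.
Qed.

Lemma is_series_poisson_factorial_moment t :
  is_series (fun j => INR j * (INR j - 1) * poisson_weight t j) (t * t * exp t).
Proof.
  apply is_series_shift_R, is_series_shift_R.
  change (INR 1) with 1; change (INR 0) with 0.
  rewrite Rminus_diag, !Rmult_0_l, !Rmult_0_r, !Rmult_0_l, !Rminus_0_r.
  apply (is_series_ext_R (fun j => t * t * poisson_weight t j)).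
  - intros j. rewrite !poisson_weight_S, !S_INR.
    assert (INR j + 1 <> 0) by (pose proof (pos_INR j); lra).
    assert (INR j + 1 + 1 <> 0) by (pose proof (pos_INR j); lra).
    field; auto.
  - apply (is_series_scal_l (V := R_NormedModule) (t * t)), is_series_poisson_weight.
Qed.

Lemma is_series_poisson_variance t :
  is_series (fun j => (t - INR j) ^ 2 * poisson_weight t j) (t * exp t).
Proof.
  replace (t * exp t) with
    (t * t * exp t + t * exp t - 2 * t * (t * exp t) + t * t * exp t) by ring.
  apply (is_series_ext_R (fun j =>
     INR j * (INR j - 1) * poisson_weight t j + INR j * poisson_weight t j
     - 2 * t * (INR j * poisson_weight t j) + t * t * poisson_weight t j)).
  - intros j. ring.
  - apply (is_series_plus (V := R_NormedModule) _ _ _ _);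
      [| apply (is_series_scal_l (V := R_NormedModule)), is_series_poisson_weight].
    apply (is_series_minus (V := R_NormedModule) _ _ _ _);
      [| apply (is_series_scal_l (V := R_NormedModule)), is_series_poisson_mean].
    apply (is_series_plus (V := R_NormedModule) _ _ _ _).
    + apply is_series_poisson_factorial_moment.
    + apply is_series_poisson_mean.
Qed.

Lemma dominated_series (a c : nat -> R) (C : R) :
  (forall n, Rabs (a n) <= c n) -> is_series c C ->
  ex_series a /\ Rabs (Series a) <= C.
Proof.
  intros Hac Hc.
  assert (Ec : ex_series c) by (exists C; exact Hc).
  assert (Ea : ex_series (fun n => Rabs (a n))).
  { apply (ex_series_le (V := R_CompleteNormedModule) _ c); auto. intros n.
    change (norm (Rabs (a n))) with (Rabs (Rabs (a n))). now rewrite Rabs_Rabsolu. }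
  split.
  - now apply (ex_series_le (V := R_CompleteNormedModule) a c).
  - apply Rle_trans with (Series (fun n => Rabs (a n))); [now apply Series_Rabs |].
    rewrite <- (is_series_unique c C Hc).
    apply Series_le; auto. intros n; split; [apply Rabs_pos | auto].
Qed.

Definition bounded_by (f : Z -> R) (B : R) : Prop := forall m, Rabs (f m) <= B.

Definition poisson_avg (t : R) (f : Z -> R) (k : Z) : R :=
  exp (- t) * Series (fun j => poisson_weight t j * f (k - Z.of_nat j)%Z).

Lemma exp_opp_mul_exp t : exp (- t) * exp t = 1.
Proof. now rewrite <- exp_plus, Rplus_opp_l, exp_0. Qed.

Lemma Rabs_exp_opp_Series_le t (a c : nat -> R) (C : R) :
  (forall j, Rabs (a j) <= c j) -> is_series c (exp t * C) ->
  Rabs (exp (- t) * Series a) <= C.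
Proof.
  intros Hac Hc. destruct (dominated_series a c _ Hac Hc) as [_ Ha].
  rewrite Rabs_mult, (Rabs_right (exp _)) by (apply Rle_ge, Rlt_le, exp_pos).
  apply Rle_trans with (exp (- t) * (exp t * C)).
  - apply Rmult_le_compat_l; [apply Rlt_le, exp_pos | exact Ha].
  - rewrite <- Rmult_assoc, exp_opp_mul_exp. lra.
Qed.

Lemma Rabs_poisson_term_le t f B j m : 0 <= t -> bounded_by f B ->
  Rabs (poisson_weight t j * f m) <= B * poisson_weight t j.
Proof.
  intros Ht Hf. assert (0 <= poisson_weight t j) by now apply poisson_weight_ge0.
  rewrite Rabs_mult, Rabs_right, Rmult_comm by lra.
  now apply Rmult_le_compat_r.
Qed.

Lemma ex_series_poisson t f B k : 0 <= t -> bounded_by f B ->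
  ex_series (fun j => poisson_weight t j * f (k - Z.of_nat j)%Z).
Proof.
  intros Ht Hf. apply (dominated_series _ (fun j => B * poisson_weight t j) (B * exp t)).
  - intros j. now apply Rabs_poisson_term_le.
  - apply (is_series_scal_l (V := R_NormedModule)), is_series_poisson_weight.
Qed.

Lemma Rabs_poisson_avg_le t f B k : 0 <= t -> bounded_by f B ->
  Rabs (poisson_avg t f k) <= B.
Proof.
  intros Ht Hf. apply (Rabs_exp_opp_Series_le t _ (fun j => B * poisson_weight t j)).
  - intros j. now apply Rabs_poisson_term_le.
  - rewrite Rmult_comm.
    apply (is_series_scal_l (V := R_NormedModule)), is_series_poisson_weight.
Qed.

Lemma poisson_avg_ext t f g k : (forall m, f m = g m) ->
  poisson_avg t f k = poisson_avg t g k.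
Proof. intros Hfg. unfold poisson_avg. f_equal. apply Series_ext. intros j. now rewrite Hfg. Qed.

Lemma poisson_avg_plus t f g B C k : 0 <= t -> bounded_by f B -> bounded_by g C ->
  poisson_avg t (fun m => f m + g m) k = poisson_avg t f k + poisson_avg t g k.
Proof.
  intros Ht Hf Hg. unfold poisson_avg. rewrite <- Rmult_plus_distr_l. f_equal.
  rewrite <- Series_plus by (eapply ex_series_poisson; eauto).
  apply Series_ext. intros j. ring.
Qed.

Lemma poisson_avg_scal t c f k :
  poisson_avg t (fun m => c * f m) k = c * poisson_avg t f k.
Proof.
  unfold poisson_avg.
  rewrite (Series_ext _ (fun j => c * (poisson_weight t j * f (k - Z.of_nat j)%Z)))
    by (intros; ring).
  rewrite Series_scal_l. ring.
Qed.

Lemma poisson_avg_const t c k : poisson_avg t (fun _ => c) k = c.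
Proof.
  unfold poisson_avg. rewrite (is_series_unique _ (exp t * c)).
  - rewrite <- Rmult_assoc, exp_opp_mul_exp. ring.
  - apply (is_series_ext_R (fun j => c * poisson_weight t j)); [intros; ring |].
    rewrite Rmult_comm. apply (is_series_scal_l (V := R_NormedModule)), is_series_poisson_weight.
Qed.

Lemma poisson_avg_shift t f s k :
  poisson_avg t (fun m => f (m - s)%Z) k = poisson_avg t f (k - s)%Z.
Proof.
  unfold poisson_avg. f_equal. apply Series_ext. intros j. do 2 f_equal. lia.
Qed.

Lemma poisson_avg_dist_le t f c e k : 0 <= t -> bounded_by (fun m => f m - c) e ->
  Rabs (poisson_avg t f k - c) <= e.
Proof.
  intros Ht Hfc.
  rewrite (poisson_avg_ext t f (fun m => (f m - c) + c)) by (intros; ring).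
  rewrite (poisson_avg_plus t _ _ e (Rabs c)); auto.
  - rewrite poisson_avg_const, Rplus_minus_r. now apply Rabs_poisson_avg_le.
  - intros m; apply Rle_refl.
Qed.

Lemma is_series_poisson_increment t f B k : 0 < t -> bounded_by f B ->
  is_series (fun j => poisson_weight t j * (1 - INR j / t) * f (k - Z.of_nat j)%Z)
    (Series (fun j => poisson_weight t j * f (k - Z.of_nat j)%Z)
     - Series (fun j => poisson_weight t j * f (k - 1 - Z.of_nat j)%Z)).
Proof.
  intros Ht Hf.
  set (v := fun j => poisson_weight t j * f (k - 1 - Z.of_nat j)%Z).
  set (v' := fun j => match j with O => 0 | S i => v i end).
  assert (Hv' : is_series v' (Series v)).
  { apply is_series_shift_R. rewrite Rminus_0_r.
    apply Series_correct, (ex_series_poisson t f B); [lra | exact Hf]. }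
  apply (is_series_ext_R (fun j => poisson_weight t j * f (k - Z.of_nat j)%Z - v' j)).
  - intros [|i]; unfold v', v; cbv beta iota.
    + change (INR 0) with 0. unfold Rdiv. ring.
    + replace (k - 1 - Z.of_nat i)%Z with (k - Z.of_nat (S i))%Z by lia.
      rewrite poisson_weight_S.
      assert (INR (S i) <> 0) by (apply not_0_INR; lia).
      field. split; lra.
  - refine (is_series_minus (V := R_NormedModule) _ _ _ _ _ Hv').
    apply Series_correct, (ex_series_poisson t f B); [lra | exact Hf].
Qed.

Lemma Rabs_le_sqr_div x a : 0 < a -> Rabs x <= x ^ 2 / (2 * a) + a / 2.
Proof.
  intros Ha. rewrite <- pow2_abs.
  assert (0 <= (Rabs x - a) ^ 2) by apply pow2_ge_0.
  apply Rmult_le_reg_l with (2 * a); [lra |].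
  replace (2 * a * (Rabs x ^ 2 / (2 * a) + a / 2)) with (Rabs x ^ 2 + a * a)
    by (field; lra).
  nra.
Qed.

Lemma Rabs_poisson_increment_term_le t f B s j m : 0 < t -> 0 < s -> bounded_by f B ->
  Rabs (poisson_weight t j * (1 - INR j / t) * f m)
  <= B / t * (/ (2 * s) * ((t - INR j) ^ 2 * poisson_weight t j) + s / 2 * poisson_weight t j).
Proof.
  intros Ht Hs Hf. assert (0 <= poisson_weight t j) by (apply poisson_weight_ge0; lra).
  assert (HB : 0 <= B) by (eapply Rle_trans; [apply Rabs_pos | apply (Hf m)]).
  replace (1 - INR j / t) with ((t - INR j) / t) by (field; lra).
  replace (B / t * (/ (2 * s) * ((t - INR j) ^ 2 * poisson_weight t j)
                    + s / 2 * poisson_weight t j))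
    with (poisson_weight t j * (((t - INR j) ^ 2 / (2 * s) + s / 2) / t) * B)
    by (field; lra).
  rewrite Rabs_mult. apply Rmult_le_compat; [apply Rabs_pos | apply Rabs_pos | | apply Hf].
  rewrite Rabs_mult, Rabs_div, (Rabs_right t), Rabs_right by lra.
  apply Rmult_le_compat_l; [lra |].
  apply Rmult_le_compat_r; [apply Rlt_le, Rinv_0_lt_compat, Ht |].
  now apply Rabs_le_sqr_div.
Qed.

Lemma poisson_avg_step_le t f B k : 0 < t -> bounded_by f B ->
  Rabs (poisson_avg t f k - poisson_avg t f (k - 1)%Z) <= B / sqrt t.
Proof.
  intros Ht Hf. set (s := sqrt t).
  assert (Hs : 0 < s) by now apply sqrt_lt_R0.
  assert (Hss : s * s = t) by (apply sqrt_sqrt; lra).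
  unfold poisson_avg. rewrite <- Rmult_minus_distr_l.
  rewrite <- (is_series_unique _ _ (is_series_poisson_increment t f B k Ht Hf)).
  (* AM-GM at scale [s = sqrt t], summed against the Poisson variance [t] *)
  apply (Rabs_exp_opp_Series_le t _ (fun j =>
    B / t * (/ (2 * s) * ((t - INR j) ^ 2 * poisson_weight t j) + s / 2 * poisson_weight t j))).
  - intros j. now apply Rabs_poisson_increment_term_le.
  - replace (exp t * (B / s)) with (B / t * (/ (2 * s) * (t * exp t) + s / 2 * exp t))
      by (clearbody s; subst t; field; lra).
    apply (is_series_scal_l (V := R_NormedModule)).
    apply (is_series_plus (V := R_NormedModule));
      apply (is_series_scal_l (V := R_NormedModule)).
    + apply is_series_poisson_variance.
    + apply is_series_poisson_weight.
Qed.

Definition step_bounded (F : Z -> R) (L : R) : Prop :=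
  forall m, Rabs (F m - F (m - 1)%Z) <= L.

Lemma step_bounded_iter F L k j : step_bounded F L ->
  Rabs (F k - F (k - Z.of_nat j)%Z) <= INR j * L.
Proof.
  intros HF. induction j as [|j IH].
  - rewrite Z.sub_0_r, Rminus_diag, Rabs_R0. simpl. lra.
  - rewrite S_INR.
    replace (F k - F (k - Z.of_nat (S j))%Z) with
      ((F k - F (k - Z.of_nat j)%Z) + (F (k - Z.of_nat j)%Z - F (k - Z.of_nat j - 1)%Z))
      by (replace (k - Z.of_nat j - 1)%Z with (k - Z.of_nat (S j))%Z by lia; ring).
    eapply Rle_trans; [apply Rabs_triang |]. specialize (HF (k - Z.of_nat j)%Z). lra.
Qed.

Lemma Rabs_sub_poisson_avg_le t F B L k : 0 <= t -> bounded_by F B -> step_bounded F L ->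
  Rabs (F k - poisson_avg t F k) <= L * t.
Proof.
  intros Ht HFB HFL.
  assert (E : F k - poisson_avg t F k = poisson_avg t (fun m => F k + -1 * F m) k).
  { rewrite (poisson_avg_plus t (fun _ => F k) (fun m => -1 * F m) (Rabs (F k)) B); auto.
    - rewrite poisson_avg_const, poisson_avg_scal. ring.
    - intros m; apply Rle_refl.
    - intros m. rewrite Rabs_mult, Rabs_m1, Rmult_1_l. apply HFB. }
  rewrite E. unfold poisson_avg.
  (* the Poisson distribution has mean [t] *)
  apply (Rabs_exp_opp_Series_le t _ (fun j => L * (INR j * poisson_weight t j))).
  - intros j. assert (0 <= poisson_weight t j) by now apply poisson_weight_ge0.
    rewrite Rabs_mult, Rabs_right by lra.
    replace (F k + -1 * F (k - Z.of_nat j)%Z) with (F k - F (k - Z.of_nat j)%Z) by ring.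
    apply Rle_trans with (poisson_weight t j * (INR j * L)); [| right; ring].
    apply Rmult_le_compat_l; [lra |]. now apply step_bounded_iter.
  - replace (exp t * (L * t)) with (L * (t * exp t)) by ring.
    apply (is_series_scal_l (V := R_NormedModule)), is_series_poisson_mean.
Qed.

Lemma Rabs_sum_le (x : nat -> R) M N : (forall i, (i <= N)%nat -> Rabs (x i) <= M) ->
  Rabs (sum_f_R0 x N) <= INR (S N) * M.
Proof.
  intros Hx. eapply Rle_trans; [apply Rsum_abs |].
  rewrite Rmult_comm, <- sum_cte. now apply sum_Rle.
Qed.

Lemma Rabs_mean_le (x : nat -> R) M N : (forall i, (i <= N)%nat -> Rabs (x i) <= M) ->
  Rabs (/ INR (S N) * sum_f_R0 x N) <= M.
Proof.
  intros Hx. assert (HN : 0 < INR (S N)) by (apply lt_0_INR; lia).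
  rewrite Rabs_mult, Rabs_right by (apply Rle_ge, Rlt_le, Rinv_0_lt_compat, HN).
  apply Rmult_le_reg_l with (INR (S N)); [exact HN |].
  rewrite <- Rmult_assoc, Rinv_r, Rmult_1_l by lra. now apply Rabs_sum_le.
Qed.

Lemma poisson_avg_sum t (g : nat -> Z -> R) B N k : 0 <= t ->
  (forall j, bounded_by (g j) B) ->
  poisson_avg t (fun m => sum_f_R0 (fun j => g j m) N) k
  = sum_f_R0 (fun j => poisson_avg t (g j) k) N.
Proof.
  intros Ht Hg. induction N as [|N IH]; [reflexivity |].
  rewrite tech5, <- IH.
  apply (poisson_avg_plus t _ (g (S N)) (INR (S N) * B) B); auto.
  intros m. apply Rabs_sum_le. intros i _. apply Hg.
Qed.

Definition ces (b : Z -> R) (n : nat) (k : Z) : R :=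
  / INR n * sum_f_R0 (fun j => b (k - Z.of_nat (S j))%Z) (pred n).

Lemma ces_dist_le b c e n k : (n >= 1)%nat -> bounded_by (fun m => b m - c) e ->
  Rabs (ces b n k - c) <= e.
Proof.
  intros Hn Hbc. destruct n as [|N]; [lia |]. unfold ces; simpl pred.
  replace (/ INR (S N) * sum_f_R0 (fun j => b (k - Z.of_nat (S j))%Z) N - c)
    with (/ INR (S N) * sum_f_R0 (fun j => b (k - Z.of_nat (S j))%Z - c) N)
    by (rewrite minus_sum, sum_cte; field; apply not_0_INR; lia).
  apply Rabs_mean_le. intros i _. apply Hbc.
Qed.

Lemma Rabs_sub_ces_le F L n k : (n >= 1)%nat -> step_bounded F L ->
  Rabs (F k - ces F n k) <= INR n * L.
Proof.
  intros Hn HF. destruct n as [|N]; [lia |]. unfold ces; simpl pred.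
  replace (F k - / INR (S N) * sum_f_R0 (fun j => F (k - Z.of_nat (S j))%Z) N)
    with (/ INR (S N) * sum_f_R0 (fun j => F k - F (k - Z.of_nat (S j))%Z) N)
    by (rewrite minus_sum, sum_cte; field; apply not_0_INR; lia).
  apply Rabs_mean_le. intros i Hi.
  eapply Rle_trans; [now apply step_bounded_iter |].
  apply Rmult_le_compat_r.
  - eapply Rle_trans; [apply Rabs_pos | apply (HF 0%Z)].
  - apply le_INR. lia.
Qed.

Lemma bounded_by_ces b B n : (n >= 1)%nat -> bounded_by b B -> bounded_by (ces b n) B.
Proof.
  intros Hn Hb m. rewrite <- (Rminus_0_r (ces b n m)).
  apply ces_dist_le; [exact Hn |]. intros m'. rewrite Rminus_0_r. apply Hb.
Qed.

Lemma sum_shift_step (b : Z -> R) N m :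
  sum_f_R0 (fun j => b (m - Z.of_nat (S j))%Z) N
  - sum_f_R0 (fun j => b (m - 1 - Z.of_nat (S j))%Z) N
  = b (m - 1)%Z - b (m - 1 - Z.of_nat (S N))%Z.
Proof.
  induction N as [|N IH].
  - simpl. do 2 f_equal; lia.
  - rewrite !tech5.
    replace (b (m - Z.of_nat (S (S N)))%Z) with (b (m - 1 - Z.of_nat (S N))%Z)
      by (f_equal; lia).
    lra.
Qed.

Lemma step_bounded_ces b B n : (n >= 1)%nat -> bounded_by b B ->
  step_bounded (ces b n) (2 * B / INR n).
Proof.
  intros Hn Hb m. destruct n as [|N]; [lia |].
  assert (HN : 0 < INR (S N)) by (apply lt_0_INR; lia).
  unfold ces; simpl pred. rewrite <- Rmult_minus_distr_l, sum_shift_step.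
  rewrite Rabs_mult, Rabs_right by (apply Rle_ge, Rlt_le, Rinv_0_lt_compat, HN).
  unfold Rdiv. rewrite Rmult_comm. apply Rmult_le_compat_r; [apply Rlt_le, Rinv_0_lt_compat, HN |].
  unfold Rminus. eapply Rle_trans; [apply Rabs_triang |]. rewrite Rabs_Ropp.
  pose proof (Hb (m - 1)%Z).
  pose proof (Hb (m - 1 - Z.of_nat (S N))%Z). lra.
Qed.

Lemma poisson_avg_ces t b B n k : 0 <= t -> bounded_by b B ->
  poisson_avg t (ces b n) k = ces (poisson_avg t b) n k.
Proof.
  intros Ht Hb. unfold ces. rewrite poisson_avg_scal.
  rewrite (poisson_avg_sum t (fun j m => b (m - Z.of_nat (S j))%Z) B); auto.
  - f_equal. apply sum_eq. intros i _. apply poisson_avg_shift.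
  - intros j m. apply Hb.
Qed.

Definition time_conv (u : R -> Z -> R) (c : Z -> R) : Prop :=
  forall eps, eps > 0 -> exists T, forall t, t >= T -> forall k, Rabs (u t k - c k) <= eps.

Definition ces_conv (b : Z -> R) (c : R) : Prop :=
  forall eps, eps > 0 -> exists N, forall n, (n >= N)%nat -> (n >= 1)%nat ->
    forall k, Rabs (ces b n k - c) <= eps.

Lemma div_sqrt_eventually_le A e : 0 < e ->
  exists T, 0 < T /\ forall t, t >= T -> A / sqrt t <= e.
Proof.
  intros He. exists ((A / e) ^ 2 + 1). split; [pose proof (pow2_ge_0 (A / e)); lra |].
  intros t Ht. assert (Hst : 0 < sqrt t) by (apply sqrt_lt_R0; pose proof (pow2_ge_0 (A / e)); lra).
  assert (HAe : A / e <= sqrt t).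
  { eapply Rle_trans; [apply Rle_abs |]. rewrite <- sqrt_Rsqr_abs.
    apply sqrt_le_1_alt. unfold Rsqr. simpl in Ht. lra. }
  apply Rmult_le_reg_r with (sqrt t); [exact Hst |].
  unfold Rdiv at 1. rewrite Rmult_assoc, Rinv_l, Rmult_1_r by lra.
  apply Rmult_le_reg_l with (/ e); [now apply Rinv_0_lt_compat |].
  rewrite <- Rmult_assoc, Rinv_l, Rmult_1_l by lra. rewrite Rmult_comm. exact HAe.
Qed.

Lemma cesaro_to_poisson b B c : bounded_by b B -> ces_conv b c ->
  time_conv (fun t => poisson_avg t b) (fun _ => c).
Proof.
  intros Hb Hc e He.
  destruct (Hc (e / 2)) as [N HN]; [lra |].
  destruct (div_sqrt_eventually_le (INR (S N) * B) (e / 2)) as [T [HT HTe]]; [lra |].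
  exists T. intros t Ht k.
  assert (Ht0 : 0 < t) by lra.
  (* smoothing commutes with Cesaro means, and smoothed sequences have small increments *)
  replace (poisson_avg t b k - c) with
    ((poisson_avg t b k - ces (poisson_avg t b) (S N) k) + (poisson_avg t (ces b (S N)) k - c))
    by (rewrite (poisson_avg_ces t b B); [ring | lra | exact Hb]).
  eapply Rle_trans; [apply Rabs_triang |].
  assert (Hsmooth : Rabs (poisson_avg t b k - ces (poisson_avg t b) (S N) k) <= e / 2).
  { eapply Rle_trans.
    - apply Rabs_sub_ces_le; [lia |]. intros m. now apply (poisson_avg_step_le t b B).
    - unfold Rdiv in *. rewrite <- Rmult_assoc. apply HTe, Ht. }
  assert (Hmean : Rabs (poisson_avg t (ces b (S N)) k - c) <= e / 2).
  { apply poisson_avg_dist_le; [lra |]. intros m. apply HN; lia. }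
  lra.
Qed.

Lemma poisson_limit_shift_invariant b B c : bounded_by b B ->
  time_conv (fun t => poisson_avg t b) c -> forall k, c k = c (k - 1)%Z.
Proof.
  intros Hb Hc k.
  enough (Hd : Rabs (c k - c (k - 1)%Z) <= 0).
  { pose proof (Rle_abs (c k - c (k - 1)%Z)).
    pose proof (Rle_abs (- (c k - c (k - 1)%Z))). rewrite Rabs_Ropp in *. lra. }
  apply Rle_plus_epsilon. intros e He.
  destruct (Hc (e / 3)) as [T1 HT1]; [lra |].
  destruct (div_sqrt_eventually_le B (e / 3)) as [T2 [HT2 HT2e]]; [lra |].
  set (t := Rmax T1 T2).
  assert (Ht1 : t >= T1) by (apply Rle_ge, Rmax_l).
  assert (Ht2 : t >= T2) by (apply Rle_ge, Rmax_r).
  pose proof (HT1 t Ht1 k). pose proof (HT1 t Ht1 (k - 1)%Z).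
  pose proof (poisson_avg_step_le t b B k ltac:(lra) Hb).
  pose proof (HT2e t Ht2).
  replace (c k - c (k - 1)%Z) with
    (- (poisson_avg t b k - c k) + (poisson_avg t b k - poisson_avg t b (k - 1)%Z)
     + (poisson_avg t b (k - 1)%Z - c (k - 1)%Z)) by ring.
  eapply Rle_trans; [apply Rabs_triang |].
  eapply Rle_trans; [apply Rplus_le_compat_r, Rabs_triang |].
  rewrite Rabs_Ropp. lra.
Qed.

Lemma shift_invariant_const (c : Z -> R) : (forall k, c k = c (k - 1)%Z) ->
  forall k, c k = c 0%Z.
Proof.
  intros Hc. apply Z.peano_ind; [reflexivity | |].
  - intros k Hk. rewrite Hc. now replace (Z.succ k - 1)%Z with k by lia.
  - intros k Hk. rewrite <- Hk, (Hc k). now replace (k - 1)%Z with (Z.pred k) by lia.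
Qed.

Lemma poisson_to_cesaro b B c : bounded_by b B ->
  time_conv (fun t => poisson_avg t b) (fun _ => c) -> ces_conv b c.
Proof.
  intros Hb Hc e He.
  assert (HB : 0 <= B) by (eapply Rle_trans; [apply Rabs_pos | apply (Hb 0%Z)]).
  destruct (Hc (e / 2)) as [T HT]; [lra |].
  set (t := Rmax T 0).
  assert (HtT : t >= T) by (apply Rle_ge, Rmax_l).
  assert (Ht0 : 0 <= t) by apply Rmax_r.
  destruct (INR_unbounded (4 * B * t / e)) as [N HN].
  exists N. intros n Hn Hn1 k.
  assert (Hnpos : 0 < INR n) by (apply lt_0_INR; lia).
  (* at a fixed time [t], the Cesaro mean of [b] moves by at most [2 B t / n] under smoothing *)
  replace (ces b n k - c) with
    ((ces b n k - poisson_avg t (ces b n) k) + (ces (poisson_avg t b) n k - c))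
    by (rewrite (poisson_avg_ces t b B); [ring | exact Ht0 | exact Hb]).
  eapply Rle_trans; [apply Rabs_triang |].
  assert (Hsmooth : Rabs (ces b n k - poisson_avg t (ces b n) k) <= e / 2).
  { eapply Rle_trans.
    - apply (Rabs_sub_poisson_avg_le t _ B); [exact Ht0 | now apply bounded_by_ces |].
      now apply step_bounded_ces.
    - assert (HNn : 4 * B * t / e < INR n) by (pose proof (le_INR N n Hn); lra).
      apply Rmult_lt_compat_r with (r := e) in HNn; [| lra].
      unfold Rdiv in *. rewrite Rmult_assoc, Rinv_l, Rmult_1_r in HNn by lra.
      apply Rmult_le_reg_l with (INR n); [exact Hnpos |].
      replace (INR n * (2 * B * / INR n * t)) with (2 * B * t) by (field; lra).
      nra. }
  assert (Hmean : Rabs (ces (poisson_avg t b) n k - c) <= e / 2).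
  { apply ces_dist_le; [exact Hn1 |]. intros m. apply HT, HtT. }
  lra.
Qed.

Lemma poisson_limit_ces_conv b B c : bounded_by b B ->
  time_conv (fun t => poisson_avg t b) c -> ces_conv b (c 0%Z).
Proof.
  intros Hb Hc. apply (poisson_to_cesaro b B); [exact Hb |].
  intros e He. destruct (Hc e He) as [T HT]. exists T. intros t Ht k.
  rewrite <- (shift_invariant_const c (poisson_limit_shift_invariant b B c Hb Hc) k).
  now apply HT.
Qed.

Lemma Rabs_Re_le_Cmod z : Rabs (Re z) <= Cmod z.
Proof.
  unfold Cmod. rewrite <- sqrt_Rsqr_abs. apply sqrt_le_1_alt. unfold Rsqr.
  pose proof (pow2_ge_0 (Im z)). simpl in *. nra.
Qed.

Lemma Rabs_Im_le_Cmod z : Rabs (Im z) <= Cmod z.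
Proof.
  unfold Cmod. rewrite <- sqrt_Rsqr_abs. apply sqrt_le_1_alt. unfold Rsqr.
  pose proof (pow2_ge_0 (Re z)). simpl in *. nra.
Qed.

Lemma Cmod_le_Rabs_Re_Im z : Cmod z <= Rabs (Re z) + Rabs (Im z).
Proof.
  pose proof (Rabs_pos (Re z)); pose proof (Rabs_pos (Im z)).
  unfold Cmod. rewrite <- (sqrt_Rsqr (Rabs (Re z) + Rabs (Im z))) by lra.
  apply sqrt_le_1_alt. unfold Rsqr. rewrite <- (pow2_abs (Re z)), <- (pow2_abs (Im z)).
  pose proof (Rmult_le_pos (Rabs (Re z)) (Rabs (Im z))). nra.
Qed.

Lemma cesaro_conv_iff x0 c : cesaro_conv x0 c <->
  ces_conv (fun m => Re (x0 m)) (Re c) /\ ces_conv (fun m => Im (x0 m)) (Im c).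
Proof.
  split.
  - intros Hc. split; intros e He; destruct (Hc e He) as [N HN]; exists N;
      intros n Hn Hn1 k; specialize (HN n Hn Hn1 k).
    + exact (Rle_trans _ _ _ (Rabs_Re_le_Cmod _) HN).
    + exact (Rle_trans _ _ _ (Rabs_Im_le_Cmod _) HN).
  - intros [Hr Hi] e He.
    destruct (Hr (e / 2)) as [N1 HN1]; [lra |].
    destruct (Hi (e / 2)) as [N2 HN2]; [lra |].
    exists (max N1 N2). intros n Hn Hn1 k.
    eapply Rle_trans; [apply Cmod_le_Rabs_Re_Im |].
    pose proof (HN1 n ltac:(lia) Hn1 k). pose proof (HN2 n ltac:(lia) Hn1 k).
    unfold Csub, cesaro, ces in *; cbn [Re Im]. lra.
Qed.

Lemma unif_conv_time_iff (x : R -> Z -> Cx) c : unif_conv_time x c <->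
  time_conv (fun t k => Re (x t k)) (fun k => Re (c k))
  /\ time_conv (fun t k => Im (x t k)) (fun k => Im (c k)).
Proof.
  split.
  - intros Hc. split; intros e He; destruct (Hc e He) as [T HT]; exists T;
      intros t Ht k; specialize (HT t Ht k).
    + exact (Rle_trans _ _ _ (Rabs_Re_le_Cmod _) HT).
    + exact (Rle_trans _ _ _ (Rabs_Im_le_Cmod _) HT).
  - intros [Hr Hi] e He.
    destruct (Hr (e / 2)) as [T1 HT1]; [lra |].
    destruct (Hi (e / 2)) as [T2 HT2]; [lra |].
    exists (Rmax T1 T2). intros t Ht k.
    eapply Rle_trans; [apply Cmod_le_Rabs_Re_Im |].
    pose proof (HT1 t ltac:(pose proof (Rmax_l T1 T2); lra) k).
    pose proof (HT2 t ltac:(pose proof (Rmax_r T1 T2); lra) k).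
    unfold Csub; cbn [Re Im]. lra.
Qed.

Lemma time_conv_eq_nonneg u v c : (forall t k, 0 <= t -> u t k = v t k) ->
  time_conv u c -> time_conv v c.
Proof.
  intros Huv Hu e He. destruct (Hu e He) as [T HT]. exists (Rmax T 0). intros t Ht k.
  pose proof (Rmax_l T 0); pose proof (Rmax_r T 0).
  rewrite <- Huv by lra. apply HT. lra.
Qed.

Lemma lim_seq_sum_f_R0 a l : is_series a l -> lim_seq (sum_f_R0 a) = l.
Proof.
  intros Ha. apply is_series_Reals in Ha. unfold lim_seq.
  apply (UL_sequence (sum_f_R0 a)); [| exact Ha].
  apply (epsilon_spec (inhabits 0) (fun l => Un_cv (sum_f_R0 a) l)). now exists l.
Qed.

Lemma sol_eq_poisson_avg x0 B t k : 0 <= t ->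
  bounded_by (fun m => Re (x0 m)) B -> bounded_by (fun m => Im (x0 m)) B ->
  Re (sol x0 t k) = poisson_avg t (fun m => Re (x0 m)) k
  /\ Im (sol x0 t k) = poisson_avg t (fun m => Im (x0 m)) k.
Proof.
  intros Ht Hr Hi. unfold sol, poisson_avg; simpl.
  split; f_equal; apply lim_seq_sum_f_R0, Series_correct.
  - exact (ex_series_poisson t (fun m => Re (x0 m)) B k Ht Hr).
  - exact (ex_series_poisson t (fun m => Im (x0 m)) B k Ht Hi).
Qed.

Lemma unif_conv_time_sol_iff x0 B c :
  bounded_by (fun m => Re (x0 m)) B -> bounded_by (fun m => Im (x0 m)) B ->
  unif_conv_time (sol x0) c <->
  time_conv (fun t => poisson_avg t (fun m => Re (x0 m))) (fun k => Re (c k))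
  /\ time_conv (fun t => poisson_avg t (fun m => Im (x0 m))) (fun k => Im (c k)).
Proof.
  intros Hr Hi. rewrite unif_conv_time_iff.
  split; intros [HRe HIm]; split; (eapply time_conv_eq_nonneg; [| eassumption]);
    intros t k Ht; destruct (sol_eq_poisson_avg x0 B t k Ht Hr Hi); auto.
Qed.

Theorem theorem1 (x0 : Z -> Cx) (hx0 : linf x0) :
  (good x0 <-> exists c : Cx, cesaro_conv x0 c) /\
  (forall c : Cx, cesaro_conv x0 c -> unif_conv_time (sol x0) (fun _ => c)).
Proof.
  destruct hx0 as [M HM].
  assert (Hre : bounded_by (fun m => Re (x0 m)) M)
    by (intros m; exact (Rle_trans _ _ _ (Rabs_Re_le_Cmod _) (HM m))).
  assert (Him : bounded_by (fun m => Im (x0 m)) M)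
    by (intros m; exact (Rle_trans _ _ _ (Rabs_Im_le_Cmod _) (HM m))).
  assert (Hconv : forall c, cesaro_conv x0 c -> unif_conv_time (sol x0) (fun _ => c)).
  { intros c Hc. apply cesaro_conv_iff in Hc as [Hcr Hci].
    apply (unif_conv_time_sol_iff x0 M); [exact Hre | exact Him |].
    split; eapply cesaro_to_poisson; eassumption. }
  split; [split |].
  - intros [c Hc].
    apply (unif_conv_time_sol_iff x0 M) in Hc as [Hcr Hci]; [| exact Hre | exact Him].
    exists (mkC (Re (c 0%Z)) (Im (c 0%Z))). apply cesaro_conv_iff.
    exact (conj (poisson_limit_ces_conv _ M _ Hre Hcr) (poisson_limit_ces_conv _ M _ Him Hci)).
  - intros [c Hc]. exists (fun _ => c). now apply Hconv.
  - exact Hconv.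
Qed.
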